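(* Let $n\geq 6$ be an integer. Then $\Delta_D(S_n)^*$ is connected if and only if neither $n$ nor $n-1$ is a prime.
   Context: $S_n$ is the symmetric group. The deep commuting graph $\Delta_D(G)$ has vertex set $G$, distinct vertices adjacent iff their preimages commute in a Schur cover $\tilde G$ of $G$ (a central extension $\{e\}\to M(G)\to\tilde G\to G\to\{e\}$ with kernel contained in $Z(\tilde G)\cap[\tilde G,\tilde G]$, of maximal order; $M(G)$ the Schur multiplier). A vertex is dominant if adjacent to every other vertex; the reduced graph $\Gamma^*$ is the subgraph induced by the non-dominant vertices. *)

From mathcomp Require Import all_boot all_fingroup all_solvable.
Set Implicit Arguments. Unset Strict Implicit. Unset Printing Implicit Defensive.
Local Open Scope group_scope.

Definition stem_extension (gT hT : finGroupType) (G : {group gT})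
    (H : {group hT}) (f : {morphism H >-> gT}) : Prop :=
  f @* H = G /\ 'ker f \subset 'Z(H) :&: H^`(1).

Definition schur_cover (gT hT : finGroupType) (G : {group gT})
    (H : {group hT}) (f : {morphism H >-> gT}) : Prop :=
  stem_extension G f /\
  forall (kT : finGroupType) (K : {group kT}) (g : {morphism K >-> gT}),
    stem_extension G g -> #|'ker g| <= #|'ker f|.

(* Deep commuting graph w.r.t. the cover (H, f): distinct x y of G are
   adjacent iff some (equivalently any) preimages commute in H. *)
Definition deep_adj (gT hT : finGroupType) (H : {group hT})
    (f : {morphism H >-> gT}) (x y : gT) : bool :=
  (x != y) &&
  [exists x' : hT, exists y' : hT,
     [&& x' \in H, y' \in H, f x' == x, f y' == y & x' * y' == y' * x']].

Definition deep_dominant (gT hT : finGroupType) (G : {group gT})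
    (H : {group hT}) (f : {morphism H >-> gT}) (x : gT) : bool :=
  (x \in G) && [forall y in G, (y != x) ==> deep_adj f x y].

Definition reduced_edge (gT hT : finGroupType) (G : {group gT})
    (H : {group hT}) (f : {morphism H >-> gT}) : rel gT :=
  fun x y =>
    [&& x \in G, ~~ deep_dominant G f x, y \in G, ~~ deep_dominant G f y
      & deep_adj f x y].

Definition reduced_deep_connected (gT hT : finGroupType) (G : {group gT})
    (H : {group hT}) (f : {morphism H >-> gT}) : Prop :=
  forall x y, x \in G -> ~~ deep_dominant G f x ->
              y \in G -> ~~ deep_dominant G f y ->
              connect (reduced_edge G f) x y.

From mathcomp Require Import all_boot all_fingroup all_solvable.
From mathcomp Require Import zify.
Set Implicit Arguments. Unset Strict Implicit. Unset Printing Implicit Defensive.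

(* Deeply adjacent elements commute, and two elements of a common cyclic
   subgroup are deeply adjacent, because powers of a preimage of w are
   preimages of the powers of w; hence commuting elements of coprime orders
   are linked through their product. As Z(S_n) = 1, the non-dominant vertices are the non-identity
   permutations.
   If p = n or p = n - 1 is prime, an element of order p is a p-cycle whose
   centraliser is the group it generates, so the elements of exponent p form
   a union of components containing no transposition.
   Otherwise n >= 9, and every non-identity permutation is linked, through a
   power of prime order, to a transposition: an element of odd prime order
   either fixes two points or has two cycles and commutes with the involution
   exchanging them, and an involution commutes with an element of order 3
   fixing two points. Transpositions are linked to each other through a
   3-cycle on three further points. *)

Local Open Scope group_scope.

Section DeepCommutingGraph.

Variables (gT hT : finGroupType) (G : {group gT}) (H : {group hT}).
Variable f : {morphism H >-> gT}.

Lemma deep_adj_sym x y : deep_adj f x y = deep_adj f y x.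
Proof.
rewrite /deep_adj eq_sym; congr (_ && _).
by apply/existsP/existsP => -[x' /existsP[y' /and5P[x'H y'H fx' fy' cx'y']]];
  exists y'; apply/existsP; exists x'; rewrite x'H y'H fx' fy' eq_sym.
Qed.

Lemma deep_adj_commute x y : deep_adj f x y -> commute x y.
Proof.
case/andP=> _ /existsP[x' /existsP[y' /and5P[x'H y'H /eqP<- /eqP<- /eqP c']]].
by rewrite /commute -!morphM // c'.
Qed.

Lemma reduced_edge_sym : symmetric (reduced_edge G f).
Proof.
by move=> x y; rewrite /reduced_edge deep_adj_sym;
  apply/and5P/and5P => -[? ? ? ? ?]; split.
Qed.

Lemma reduced_connect_sym : connect_sym (reduced_edge G f).
Proof. exact: sym_connect_sym reduced_edge_sym. Qed.

Lemma deep_dominant_center x : deep_dominant G f x -> x \in 'Z(G).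
Proof.
case/andP=> xG /forallP dominant; rewrite inE xG; apply/centP => y yG.
have [-> // | yx] := eqVneq y x.
by apply: deep_adj_commute; move/implyP: (dominant y) => /(_ yG)/implyP; apply.
Qed.

Lemma nontrivial_nondominant x :
  'Z(G) = 1 -> x != 1 -> ~~ deep_dominant G f x.
Proof.
by move=> ZG1; apply: contra => /deep_dominant_center; rewrite ZG1 inE.
Qed.

Hypothesis fHG : f @* H = G.

Lemma deep_adj_cycle x w : w \in G -> x \in <[w]> -> x != w -> deep_adj f x w.
Proof.
rewrite -fHG => /morphimP[w' _ w'H ->] /cycleP[i ->] xw; rewrite /deep_adj xw.
apply/existsP; exists (w' ^+ i); apply/existsP; exists w'.
by rewrite groupX // w'H morphX // !eqxx; apply/eqP/commute_sym/commuteX.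
Qed.

Lemma deep_dominant1 : deep_dominant G f 1.
Proof.
apply/andP; split=> //; apply/forallP => y; apply/implyP => yG.
by apply/implyP => y1; rewrite deep_adj_cycle // ?group1 // eq_sym.
Qed.

Lemma reduced_connect_expg p x y :
    prime p -> {in G, forall v, #[v] = p -> 'C_G[v] \subset <[v]>} ->
  x ^+ p = 1 -> connect (reduced_edge G f) x y -> y ^+ p = 1.
Proof.
move=> p_pr centG xp xy.
have closed_p : closed (reduced_edge G f) [pred v | v ^+ p == 1].
  apply: (intro_closed reduced_connect_sym) => v w /and5P[vG v_nd wG _ vw].
  rewrite !inE => /eqP vp.
  have ov : #[v] = p.
    have v1 : #[v] != 1%N.
      by rewrite order_eq1; apply: contraNneq v_nd => ->; apply: deep_dominant1.
    by apply/(prime_nt_dvdP p_pr v1); rewrite order_dvdn vp.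
  have : w \in <[v]>.
    apply: (subsetP (centG v vG ov)); rewrite inE wG.
    by apply/cent1P/esym/deep_adj_commute.
  by case/cycleP=> i ->; rewrite -expgM mulnC expgM vp expg1n.
by have := closed_connect closed_p xy; rewrite !inE xp eqxx => /esym/eqP.
Qed.

Hypothesis ZG1 : 'Z(G) = 1.

Local Notation linked := (connect (reduced_edge G f)).

Lemma linked_cycle x w : w \in G -> x != 1 -> x \in <[w]> -> linked x w.
Proof.
move=> wG x1 xw; have [-> // | x_neq_w] := eqVneq x w.
have w1 : w != 1 by apply: contraNneq x1 => w1; move: xw; rewrite w1 cycle1 inE.
have xG : x \in G by apply: subsetP xw; rewrite cycle_subG.
apply: connect1; apply/and5P; split; rewrite ?nontrivial_nondominant //.
exact: deep_adj_cycle.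
Qed.

Lemma linked_coprime x y : x \in G -> y \in G -> x != 1 -> y != 1 ->
  commute x y -> coprime #[x] #[y] -> linked x y.
Proof.
move=> xG yG x1 y1 cxy co_xy; have xyG : x * y \in G by rewrite groupM.
have x_xy : x \in <[x * y]>.
  by rewrite (subsetP (cycleMsub cxy co_xy)) ?cycle_id.
have y_xy : y \in <[x * y]>.
  rewrite cxy (subsetP (cycleMsub (commute_sym cxy) _)) ?cycle_id //.
  by rewrite coprime_sym.
apply: connect_trans (linked_cycle xyG x1 x_xy) _.
by rewrite reduced_connect_sym linked_cycle.
Qed.

End DeepCommutingGraph.

Lemma coprime_dvd2_odd m k : m %| 2 -> odd k -> coprime m k.
Proof. by move=> m2 k_odd; rewrite (coprime_dvdl m2) ?coprime2n. Qed.

Lemma involution_uniq_cons (T : eqType) (z : T -> T) A a :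
    involutive z -> uniq (A ++ map z A) -> a \notin A ++ map z A -> z a != a ->
  uniq ((a :: A) ++ map z (a :: A)).
Proof.
move=> zK uA aA za; rewrite cat_cons cons_uniq /= -cat1s uniq_catCA cat1s.
have za_notin : z a \notin A ++ map z A.
  rewrite mem_cat negb_or (mem_map (can_inj zK)); apply/andP; split.
    by apply: contra aA => zaA; rewrite mem_cat -[a]zK map_f ?orbT.
  by apply: contra aA; rewrite mem_cat => ->.
move: aA; rewrite cons_uniq za_notin uA !mem_cat inE !negb_or andbT eq_sym za.
by case/andP=> -> ->.
Qed.

Section Permutations.

Variable T : finType.
Implicit Types (s z : {perm T}) (a b c d : T) (l : seq T).

Lemma card_notin_seq l : #|T| <= #|[set x | x \notin l]| + size l.
Proof.
rewrite -(cardsC [set x | x \notin l]) leq_add2l.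
by apply: leq_trans (card_size l); apply: subset_leq_card; apply/subsetP => x;
  rewrite !inE negbK.
Qed.

Lemma fresh_point l : size l < #|T| -> exists c, c \notin l.
Proof.
move=> lT; have /card_gt0P[c] : 0 < #|[set x | x \notin l]|.
  by rewrite -(leq_add2r (size l)); apply: leq_trans lT (card_notin_seq l).
by rewrite inE; exists c.
Qed.

Lemma fresh_pair l : (size l).+2 <= #|T| ->
  exists u v : T, [/\ u \notin l, v \notin l & u != v].
Proof.
move=> lT; have : 1 < #|[set x | x \notin l]|.
  by rewrite -(leq_add2r (size l)); apply: leq_trans lT (card_notin_seq l).
by case/card_gt1P=> u [v]; rewrite !inE; exists u, v.
Qed.

Lemma fresh_triple l : (size l).+3 <= #|T| ->
  exists u v w : T, [/\ u \notin l, v \notin l & w \notin l] /\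
                [/\ u != v, v != w & w != u].
Proof.
move=> lT; have : 2 < #|[set x | x \notin l]|.
  by rewrite -(leq_add2r (size l)); apply: leq_trans lT (card_notin_seq l).
by case/card_gt2P=> u [v [w]]; rewrite !inE; exists u, v, w.
Qed.

Lemma exists_moved_notin s l : #|[set x | s x == x]| + size l < #|T| ->
  exists2 a, a \notin l & s a != a.
Proof.
move=> lT; apply/exists_inP; apply: contraLR lT => /exists_inPn fixed.
rewrite -leqNgt; apply: leq_trans (card_notin_seq l) _; rewrite leq_add2r.
by apply: subset_leq_card; apply/subsetP => x; rewrite !inE => /fixed /negbNE.
Qed.

Lemma exists_moved s : s != 1 -> exists a, s a != a.
Proof.
move=> s1; apply/existsP; apply: contraNT s1 => /existsPn fixed.
by apply/eqP/permP => a; rewrite perm1; apply/eqP/negbNE.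
Qed.

Lemma perm_involutive z : #[z] %| 2 -> involutive z.
Proof. by rewrite order_dvdn => /eqP z2 x; rewrite -permM -expg2 z2 perm1. Qed.

Lemma involution_pairs z k :
    #[z] %| 2 -> #|[set x | z x == x]| + k.*2 < #|T| ->
  exists A, size A = k.+1 /\ uniq (A ++ map z A).
Proof.
move/perm_involutive=> zK; elim: k => [|k IHk] zT.
  have [a _ za] := @exists_moved_notin z [::] zT.
  by exists [:: a]; rewrite /= inE eq_sym za.
have [A [sizeA uA]] : exists A, size A = k.+1 /\ uniq (A ++ map z A).
  by apply: IHk; apply: leq_ltn_trans zT; rewrite leq_add2l leq_double.
have [|a aA za] := @exists_moved_notin z (A ++ map z A).
  by rewrite size_cat size_map sizeA addnn.
by exists (a :: A); split; [rewrite /= sizeA | apply: involution_uniq_cons].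
Qed.

Lemma card_permT : #|[set: {perm T}]| = #|T|`!.
Proof.
rewrite cardsT -[#|T|]cardsT -card_perm; apply: eq_card => s.
by rewrite unfold_in; apply/esym/subsetP => x; rewrite inE.
Qed.

Lemma perm_trivial_center : 2 < #|T| -> 'Z([set: {perm T}]) = 1.
Proof.
move=> T3; apply/trivgP/subsetP => s /centerP[_ cs]; rewrite inE.
apply: contraT => /exists_moved[a sa].
have [c] := @fresh_point [:: a; s a] T3; rewrite !inE negb_or => /andP[ca csa].
have fix_sa : tperm a c (s a) = s a by rewrite tpermD // eq_sym.
have /permP/(_ c) : s * tperm a c = tperm a c * s by apply: cs; rewrite inE.
rewrite !permM tpermR -fix_sa => /perm_inj/perm_inj/eqP.
by rewrite (negbTE ca).
Qed.

Lemma tperm_neq1 a b : a != b -> tperm a b != 1.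
Proof. by apply: contra_neq => /permP/(_ b); rewrite tpermR perm1. Qed.

Lemma order_tperm a b : #[tperm a b] %| 2.
Proof. by rewrite order_dvdn expg2 tperm2. Qed.

Definition three_cycle (a b c : T) : {perm T} := tperm a b * tperm a c.

Lemma three_cycleJ a b c s :
  three_cycle a b c ^ s = three_cycle (s a) (s b) (s c).
Proof. by rewrite /three_cycle conjMg !tpermJ. Qed.

Lemma three_cycle_fix a b c d :
  d \notin [:: a; b; c] -> three_cycle a b c d = d.
Proof.
rewrite !inE !negb_or => /and3P[da db dc].
by rewrite /three_cycle permM !tpermD // eq_sym.
Qed.

Lemma three_cycle_fix_out l a b c x :
  a \notin l -> b \notin l -> c \notin l -> x \in l -> three_cycle a b c x = x.
Proof.
move=> al bl cl xl; apply: three_cycle_fix; rewrite !inE.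
by apply/or3P=> -[] /eqP ex; [case/negP: al | case/negP: bl | case/negP: cl];
  rewrite -ex.
Qed.

Section ThreeCycle.

Variables a b c : T.
Hypotheses (ab : a != b) (ac : a != c) (bc : b != c).

Lemma three_cycle_a : three_cycle a b c a = b.
Proof. by rewrite /three_cycle permM tpermL tpermD // eq_sym. Qed.

Lemma three_cycle_neq1 : three_cycle a b c != 1.
Proof.
by apply: contra_neq ab => /permP/(_ a); rewrite three_cycle_a perm1.
Qed.

Lemma order_three_cycle : #[three_cycle a b c] %| 3.
Proof.
rewrite order_dvdn; apply/eqP/permP => x; rewrite perm1 permX /=.
have three_cycle_b : three_cycle a b c b = c.
  by rewrite /three_cycle permM tpermR tpermL.
have three_cycle_c : three_cycle a b c c = a.
  by rewrite /three_cycle permM (tpermD ac bc) tpermR.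
have [-> | xa] := eqVneq x a.
  by rewrite three_cycle_a three_cycle_b three_cycle_c.
have [-> | xb] := eqVneq x b.
  by rewrite three_cycle_b three_cycle_c three_cycle_a.
have [-> | xc] := eqVneq x c.
  by rewrite three_cycle_c three_cycle_a three_cycle_b.
by rewrite !three_cycle_fix // !inE negb_or xa negb_or xb xc.
Qed.

End ThreeCycle.

Lemma involution_commuting_order3 z a1 a2 a3 (A := [:: a1; a2; a3]) :
    involutive z -> uniq (A ++ map z A) ->
  exists s, [/\ s != 1, #[s] %| 3, commute z s &
               forall x, x \notin A ++ map z A -> s x = x].
Proof.
move=> zK; rewrite cat_uniq => /and3P[uA disj uzA].
have /and3P[a12 a13 a23] : [&& a1 != a2, a1 != a3 & a2 != a3].
  by move: uA; rewrite /= !inE !negb_or !andbT -andbA.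
have /and3P[z12 z13 z23] : [&& z a1 != z a2, z a1 != z a3 & z a2 != z a3].
  by move: uzA; rewrite /= !inE !negb_or !andbT -andbA.
have /hasPn zA_A := disj.
have /hasPn A_zA : ~~ has (mem (map z A)) A by rewrite has_sym.
set c := three_cycle a1 a2 a3; set c' := three_cycle (z a1) (z a2) (z a3).
have c_fix x : x \in map z A -> c x = x.
  by apply: three_cycle_fix_out; apply: A_zA; rewrite !inE eqxx ?orbT.
have c'_fix x : x \in A -> c' x = x.
  by apply: three_cycle_fix_out; apply: zA_A; rewrite map_f // !inE eqxx ?orbT.
have cc' : commute c c'.
  by rewrite /commute conjgC three_cycleJ !c'_fix // !inE eqxx ?orbT.
have /eqP c3 : c ^+ 3 == 1 by rewrite -order_dvdn order_three_cycle.
have /eqP c'3 : c' ^+ 3 == 1 by rewrite -order_dvdn order_three_cycle.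
exists (c * c'); split.
- have s_a1 : (c * c') a1 = a2.
    by rewrite permM three_cycle_a // c'_fix // !inE eqxx orbT.
  by apply: contra_neq a12 => s1; rewrite -s_a1 s1 perm1.
- by rewrite order_dvdn expgMn // c3 c'3 mulg1.
- by rewrite /commute [RHS]conjgC conjMg !three_cycleJ !zK cc'.
- move=> x; rewrite mem_cat negb_or => /andP[xA xzA].
  by rewrite permM !three_cycle_fix.
Qed.

Lemma porbit_cycleP s a u :
  reflect (exists2 g, g \in <[s]> & u = g a) (u \in porbit s a).
Proof. by rewrite porbit.unlock; apply: (iffP imsetP). Qed.

Lemma porbit_cycle_mem s g a u :
  g \in <[s]> -> (g u \in porbit s a) = (u \in porbit s a).
Proof. by case/cycleP=> i ->; rewrite porbit_sym porbit_perm porbit_sym. Qed.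

Lemma perm_commute_cycle s h g x :
  commute s h -> g \in <[s]> -> h (g x) = g (h x).
Proof.
by move=> csh /cycleP[i ->]; rewrite -!permM (commuteX i (commute_sym csh)).
Qed.

Section PrimeOrder.

Variables (s : {perm T}) (a : T).
Hypotheses (s_pr : prime #[s]) (sa : s a != a).

Lemma prime_order_stab1 g : g \in <[s]> -> g a = a -> g = 1.
Proof.
move=> gs ga; apply/eqP; apply: contraLR sa => g1; rewrite negbK.
have og : #[g] = #[s].
  by apply/(prime_nt_dvdP s_pr); rewrite ?order_eq1 // orderE order_dvdG.
have /eqP gsE : <[g]> == <[s]> by rewrite eqEcard cycle_subG gs -!orderE og /=.
have /cycleP[i ->] : s \in <[g]> by rewrite gsE cycle_id.
by rewrite permX_fix.
Qed.

Lemma prime_order_cycle_inj g h :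
  g \in <[s]> -> h \in <[s]> -> g a = h a -> g = h.
Proof.
move=> gs hs gh; apply/eqP; rewrite -(invgK h) -mulg_eq1; apply/eqP.
by apply: prime_order_stab1; rewrite ?groupM ?groupV // permM gh permK.
Qed.

Lemma card_porbit_prime : #|porbit s a| = #[s].
Proof.
by rewrite porbit.unlock card_in_imset // => g h; apply: prime_order_cycle_inj.
Qed.

End PrimeOrder.

(* Exchanges the <[s]>-orbits of a and b, mapping g a to g b for g in <[s]>. *)
Definition porbit_swap s a b u : T :=
  if [pick g in <[s]> | g a == u] is Some g then g b
  else if [pick g in <[s]> | g b == u] is Some g then g a else u.

Section PorbitSwap.

Variables (s : {perm T}) (a b : T).
Hypotheses (s_pr : prime #[s]) (sa : s a != a) (sb : s b != b).
Hypothesis (b_notin_a : b \notin porbit s a).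

Lemma porbit_swap_a g : g \in <[s]> -> porbit_swap s a b (g a) = g b.
Proof.
move=> gs; rewrite /porbit_swap; case: pickP => [h /andP[hs /eqP hg] | none].
  by rewrite (prime_order_cycle_inj s_pr sa hs gs hg).
by have := none g; rewrite gs eqxx.
Qed.

Lemma porbit_swap_b g : g \in <[s]> -> porbit_swap s a b (g b) = g a.
Proof.
move=> gs; rewrite /porbit_swap; case: pickP => [h /andP[hs /eqP hg] | _].
  case/negP: b_notin_a; apply/porbit_cycleP; exists (h * g^-1).
    by rewrite groupM ?groupV.
  by rewrite permM hg permK.
case: pickP => [h /andP[hs /eqP hg] | none].
  by rewrite (prime_order_cycle_inj s_pr sb hs gs hg).
by have := none g; rewrite gs eqxx.
Qed.

Lemma porbit_swap_out u :
  u \notin porbit s a -> u \notin porbit s b -> porbit_swap s a b u = u.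
Proof.
move=> ua ub; rewrite /porbit_swap.
case: pickP => [h /andP[hs /eqP hu] | _].
  by case/negP: ua; apply/porbit_cycleP; exists h.
case: pickP => [h /andP[hs /eqP hu] | _] //.
by case/negP: ub; apply/porbit_cycleP; exists h.
Qed.

Lemma porbit_swapK : involutive (porbit_swap s a b).
Proof.
move=> u; have [/porbit_cycleP[g gs ->] | ua] := boolP (u \in porbit s a).
  by rewrite porbit_swap_a ?porbit_swap_b.
have [/porbit_cycleP[g gs ->] | ub] := boolP (u \in porbit s b).
  by rewrite porbit_swap_b ?porbit_swap_a.
by rewrite !porbit_swap_out.
Qed.

Lemma porbit_swap_commute u :
  porbit_swap s a b (s u) = s (porbit_swap s a b u).
Proof.
have sgs g : g \in <[s]> -> g * s \in <[s]>.
  by move=> gs; rewrite groupM ?cycle_id.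
have [/porbit_cycleP[g gs ->] | ua] := boolP (u \in porbit s a).
  by rewrite -permM porbit_swap_a ?porbit_swap_a ?sgs // permM.
have [/porbit_cycleP[g gs ->] | ub] := boolP (u \in porbit s b).
  by rewrite -permM porbit_swap_b ?porbit_swap_b ?sgs // permM.
by rewrite !porbit_swap_out ?porbit_cycle_mem ?cycle_id.
Qed.

Lemma exists_commuting_involution :
  exists z, [/\ z != 1, #[z] %| 2 & commute s z].
Proof.
pose z := perm (can_inj porbit_swapK); exists z; split.
- have := porbit_swap_a (group1 _); rewrite !perm1 => swap_ab.
  apply: contraNneq b_notin_a => /permP/(_ a).
  by rewrite permE perm1 swap_ab => ->; apply: porbit_id.
- rewrite order_dvdn; apply/eqP/permP => u.
  by rewrite perm1 expgS expg1 permM !permE porbit_swapK.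
- by apply/permP => u; rewrite !permM !permE porbit_swap_commute.
Qed.

End PorbitSwap.

Lemma perm_commute_large_prime (v w : {perm T}) :
  prime #[v] -> #|T| <= #[v].+1 -> commute v w -> w \in <[v]>.
Proof.
move=> v_pr Tv cvw.
have [a va] : exists a, v a != a.
  by apply/exists_moved; rewrite -order_gt1 prime_gt1.
set O := porbit v a; have O_p : #|O| = #[v] by apply: card_porbit_prime.
have O_co : #|~: O| <= 1 by have := cardsC O; lia.
have waO : w a \in O.
  apply: contraT => waO.
  have vwa : v (w a) != w a by rewrite -permM -cvw permM (inj_eq perm_inj).
  have : porbit v (w a) \subset ~: O.
    apply/subsetP => u uwa; rewrite inE; apply: contra waO => uO.
    move: uwa uO; rewrite -!eq_porbit_mem => /eqP uwa /eqP uO.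
    by rewrite -uwa uO.
  move/subset_leq_card; rewrite card_porbit_prime //.
  by have := prime_gt1 v_pr; lia.
have /porbit_cycleP[g gv wag] := waO.
have cvg' : commute v g^-1.
  have /cycleP[j ->] : g^-1 \in <[v]> by rewrite groupV.
  exact/commuteX/commute_refl.
have h1 : w * g^-1 = 1.
  apply: perm_on_id O_co; apply/subsetP => u; rewrite !inE.
  apply: contraNN => /porbit_cycleP[k kv ->].
  rewrite (perm_commute_cycle _ (commuteM cvw cvg') kv).
  by rewrite permM wag permK.
by move/eqP: h1; rewrite mulg_eq1 invgK => /eqP ->.
Qed.

End Permutations.

Section SymmetricGroup.

Variables (T : finType) (hT : finGroupType) (H : {group hT}).
Variable f : {morphism H >-> {perm T}}.
Hypotheses (fH : f @* H = [set: {perm T}]) (T3 : 2 < #|T|).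

Let Z1 := perm_trivial_center T3.
Implicit Types (s y z : {perm T}) (a b c d : T).
Local Notation linked := (connect (reduced_edge [set: {perm T}]%G f)).

Lemma linked_odd_tperm y a b : y != 1 -> odd #[y] -> a != b ->
  y a = a -> y b = b -> linked y (tperm a b).
Proof.
move=> y1 y_odd ab ya yb; apply: (linked_coprime fH Z1); rewrite ?inE //.
- exact: tperm_neq1.
- by rewrite /commute [RHS]conjgC tpermJ ya yb.
- by rewrite coprime_sym coprime_dvd2_odd ?order_tperm.
Qed.

Lemma linked_order3 z s a b : z != 1 -> #[z] %| 2 -> s != 1 -> #[s] %| 3 ->
  commute z s -> a != b -> s a = a -> s b = b -> linked z (tperm a b).
Proof.
move=> z1 z2 s1 s3 czs ab sa sb; have s_odd := dvdn_odd s3 isT.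
apply: connect_trans _ (linked_odd_tperm s1 s_odd ab sa sb).
by apply: (linked_coprime fH Z1); rewrite ?inE ?coprime_dvd2_odd.
Qed.

Lemma linked_tperms a b c d : 6 < #|T| -> a != b -> c != d ->
  linked (tperm a b) (tperm c d).
Proof.
move=> T7 ab cd; have [e1 [e2 [e3 [[e1l e2l e3l] [e12 e23 e31]]]]] :=
  @fresh_triple T [:: a; b; c; d] T7.
set t := three_cycle e1 e2 e3.
have t1 : t != 1 by rewrite three_cycle_neq1 // eq_sym.
have t_odd : odd #[t] by rewrite (dvdn_odd (order_three_cycle _ _ _)) // eq_sym.
have t_fix x : x \in [:: a; b; c; d] -> t x = x by apply: three_cycle_fix_out.
apply: connect_trans (_ : linked t (tperm c d)).
  by rewrite reduced_connect_sym linked_odd_tperm // t_fix // !inE eqxx ?orbT.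
by rewrite linked_odd_tperm // t_fix // !inE eqxx ?orbT.
Qed.

Lemma linked_involution z : 7 < #|T| -> z != 1 -> #[z] %| 2 ->
  exists a b, a != b /\ linked z (tperm a b).
Proof.
move=> T8 z1 z2; have zK := perm_involutive z2.
have [/card_gt2P[c [d [e [[]]]]] | fixT] := ltnP 2 #|[set x | z x == x]|.
  rewrite !inE => /eqP zc /eqP zd /eqP ze [cd de ec].
  have [u [v [ul vl uv]]] := @fresh_pair T [:: c; d; e] (ltnW (ltnW (ltnW T8))).
  exists u, v; split => //.
  apply: (linked_order3 (s := three_cycle c d e)) => //.
  - by rewrite three_cycle_neq1 // eq_sym.
  - by rewrite order_three_cycle // eq_sym.
  - by rewrite /commute [RHS]conjgC three_cycleJ zc zd ze.
  - exact: three_cycle_fix.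
  - exact: three_cycle_fix.
have [A [sizeA uA]] := @involution_pairs T z 2 z2 ltac:(lia).
case: A sizeA uA => [|a1 [|a2 [|a3 []]]] // _ uA.
have [s [s1 s3 czs s_fix]] := involution_commuting_order3 zK uA.
have [u [v [uA' vA' uv]]] := @fresh_pair T [:: a1; a2; a3; z a1; z a2; z a3] T8.
exists u, v; split => //.
by apply: (linked_order3 z1 z2 s1 s3 czs uv); apply: s_fix.
Qed.

Lemma linked_odd_prime y : 7 < #|T| -> ~~ prime #|T| -> ~~ prime #|T|.-1 ->
  prime #[y] -> odd #[y] -> exists a b, a != b /\ linked y (tperm a b).
Proof.
move=> T8 T_np T1_np y_pr y_odd; have y1 : y != 1.
  by rewrite -order_gt1 prime_gt1.
have [/card_gt1P[a [b [/[!inE] /eqP ya /eqP yb ab]]] | fixT] :=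
  ltnP 1 #|[set x | y x == x]|.
  by exists a, b; split; last exact: linked_odd_tperm.
have [a ya] := exists_moved y1.
have [|b b_notin yb] := @exists_moved_notin T y (enum (porbit y a)).
  rewrite -cardE card_porbit_prime //.
  have : #[y] <= #|T| by rewrite -(card_porbit_prime y_pr ya) max_card.
  have : #[y] != #|T| by apply: contraNneq T_np => <-.
  have : #[y] != #|T|.-1 by apply: contraNneq T1_np => <-.
  lia.
rewrite mem_enum in b_notin.
have [w [w1 w2 cyw]] := exists_commuting_involution y_pr ya yb b_notin.
have [c [d [cd wcd]]] := linked_involution T8 w1 w2.
exists c, d; split => //; apply: connect_trans wcd.
by apply: (linked_coprime fH Z1); rewrite ?inE // coprime_sym coprime_dvd2_odd.
Qed.

Lemma linked_tperm x : 7 < #|T| -> ~~ prime #|T| -> ~~ prime #|T|.-1 ->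
  x != 1 -> exists a b, a != b /\ linked x (tperm a b).
Proof.
move=> T8 T_np T1_np x1; have x_gt1 : 1 < #[x] by rewrite order_gt1.
have p_pr := pdiv_prime x_gt1.
have [y yx oy] := Cauchy p_pr (pdiv_dvd #[x]).
have y1 : y != 1 by rewrite -order_gt1 oy prime_gt1.
have [a [b [ab yab]]] : exists a b, a != b /\ linked y (tperm a b).
  have [p2 | p_odd] := even_prime p_pr.
    by apply: linked_involution; rewrite ?oy ?p2.
  by apply: linked_odd_prime; rewrite ?oy.
exists a, b; split => //; apply: connect_trans yab.
by rewrite reduced_connect_sym (linked_cycle fH Z1) ?inE.
Qed.

Lemma reduced_connected_nonprime :
  7 < #|T| -> ~~ prime #|T| -> ~~ prime #|T|.-1 ->
  reduced_deep_connected [set: {perm T}]%G f.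
Proof.
move=> T8 T_np T1_np x y _ x_nd _ y_nd.
have nontrivial v : ~~ deep_dominant [set: {perm T}]%G f v -> v != 1.
  by apply: contraNneq => ->; apply: deep_dominant1 fH.
have [a [b [ab xab]]] := linked_tperm T8 T_np T1_np (nontrivial x x_nd).
have [c [d [cd ycd]]] := linked_tperm T8 T_np T1_np (nontrivial y y_nd).
rewrite reduced_connect_sym in ycd.
apply: connect_trans xab (connect_trans _ ycd).
by apply: linked_tperms; rewrite // ltnW.
Qed.

Lemma reduced_disconnected_prime p : prime p -> 2 < p -> p <= #|T| <= p.+1 ->
  ~ reduced_deep_connected [set: {perm T}]%G f.
Proof.
move=> p_pr p_gt2 /andP[pT Tp] conn.
have /(Cauchy p_pr)[y _ oy] : p %| #|[set: {perm T}]|.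
  by rewrite card_permT dvdn_fact // prime_gt0.
have y1 : y != 1 by rewrite -order_gt1 oy prime_gt1.
have [a [b [_ _ ab]]] := @fresh_pair T [::] (ltnW T3).
have t1 := tperm_neq1 ab.
have centT : {in [set: {perm T}], forall v,
    #[v] = p -> 'C_[set: {perm T}][v] \subset <[v]>}.
  move=> v _ ov; apply/subsetP => w /setIP[_ /cent1P cwv].
  by apply: perm_commute_large_prime; rewrite ?ov //; apply: commute_sym.
have tp : tperm a b ^+ p = 1.
  apply: (reduced_connect_expg fH p_pr centT (x := y)).
    by rewrite -oy expg_order.
  by apply: conn; rewrite ?inE ?nontrivial_nondominant.
have p_odd : odd p by case: (even_prime p_pr) p_gt2 => [-> | //].
have : #[tperm a b] %| gcdn 2 p.
  by rewrite dvdn_gcd order_tperm order_dvdn tp eqxx.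
by rewrite (eqP (_ : coprime 2 p)) ?coprime2n // dvdn1 order_eq1 (negbTE t1).
Qed.

End SymmetricGroup.

Local Close Scope group_scope.

Theorem theorem5p25 (n : nat) (hn : 6 <= n)
    (hT : finGroupType) (H : {group hT})
    (f : {morphism H >-> {perm 'I_n}}) :
  schur_cover [set: {perm 'I_n}]%G f ->
  (reduced_deep_connected [set: {perm 'I_n}]%G f <->
   (~~ prime n /\ ~~ prime n.-1)).
Proof.
case=> -[fH _] _.
have n3 : 2 < #|'I_n| by rewrite card_ord; apply: leq_trans hn.
split=> [connected | [n_np n1_np]].
  by split; apply/negP => p_pr;
    apply: (reduced_disconnected_prime fH n3 p_pr _ _ connected);
    rewrite ?card_ord; lia.
have n8 : 7 < n.
  rewrite ltnNge; apply/negP => n_le7.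
  have : n \in [:: 6; 7] by rewrite !inE; lia.
  by rewrite !inE => /orP[] /eqP n_eq; move: n_np n1_np; rewrite n_eq.
by apply: (reduced_connected_nonprime fH n3); rewrite card_ord.
Qed.
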